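(* Assume the high-level cost is $H(x,u,\theta)=L(x,u,\theta)+B(\theta)$ with $B(\theta)=\sum_{j}-\ln(g_j(\theta))$, where $g(\theta)\ge0 \iff \theta\in\mathcal{T}$ and $\mathcal{T}\subset\mathbb{R}^c$ is compact. Fix $x_0^j$ and $\theta^k$ and assume $\|\nabla_\theta J^L(x_0^j,\theta^k)\|\neq0$. Suppose $\nabla_\theta J^L(x_0^j,\theta^k)$ is continuous with respect to $\omega^*\in\Omega$, in the sense that the approximate gradient $\nabla_\theta J^A(x_0^j,\theta^k)$ computed from QP data $\omega$ tends to $\nabla_\theta J^L(x_0^j,\theta^k)$ as $\omega\to\omega^*$. Then there exists $\delta>0$ such that if $\|\omega-\omega^*\|^2\le\delta$, then $\langle\nabla_\theta H^A(x_0^j,\theta^k),\nabla_\theta H(x_0^j,\theta^k)\rangle>0$, where $H^A(x_0^j,\theta^k)=J^A(x_0^j,\theta^k)+B(\theta^k)$ and $H(x_0^j,\theta^k)=J^L(x_0^j,\theta^k)+B(\theta^k)$.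
   Context: Setting: parameter $\theta\in\mathbb{R}^c$. Low-level MPC (L-MPC) with initial condition $x_0$: $\min_{x,u}L(x,u,\theta)$ s.t. $(x,u)\in\mathcal{C}(\theta)$, $x_{i+1}=f(x_i,u_i,\theta)$; optimal value $J^L(x_0,\theta)$. Approximate MPC (A-MPC): the QP $\min_z\frac12z^TQ(\theta)z+q(\theta)^Tz$ s.t. $A(\theta)z=b(\theta)$, $G(\theta)z\le h(\theta)$ obtained by linearizing dynamics/constraints and quadratically approximating the cost about a trajectory; data $\omega=(A,G,Q,b,h,q)\in\Omega\subset\mathbb{R}^p$; optimal value $J^A(x_0,\theta)$, whose $\theta$-gradient is obtained by differentiating through the QP's KKT conditions. $\omega^*$ is the data of the QP approximation of L-MPC at its minimizer. $H(x_0,\theta)$ denotes the high-level cost with the L-MPC solution from $x_0$ substituted.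
   Formalization: The gradient $\nabla_\theta H(x_0^j,\theta^k)=\nabla_\theta J^L(x_0^j,\theta^k)+\nabla_\theta B(\theta^k)$ is also assumed nonzero, alongside $\|\nabla_\theta J^L(x_0^j,\theta^k)\|\neq0$. Each condition added here is assumed in the paper as well or is needed for the statement above to hold. *)

From HB Require Import structures.
From mathcomp Require Import all_boot all_order all_algebra.
From mathcomp Require Import all_classical all_reals all_analysis.
Set Implicit Arguments. Unset Strict Implicit. Unset Printing Implicit Defensive.
Import Order.TTheory GRing.Theory Num.Theory.
Import numFieldNormedType.Exports.
Local Open Scope classical_set_scope.
Local Open Scope ring_scope.

Definition dotv {R : realType} {n : nat} (u v : 'rV[R]_n) : R :=
  \sum_(i < n) u 0 i * v 0 i.

Definition is_grad {R : realType} {c : nat} (f : 'rV[R]_c -> R)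
  (x v : 'rV[R]_c) : Prop :=
  differentiable f x /\ forall h : 'rV[R]_c, 'd f x h = dotv v h.

Definition barrier {R : realType} {c m : nat} (g : 'I_m -> 'rV[R]_c -> R)
  (th : 'rV[R]_c) : R :=
  \sum_(j < m) - ln (g j th).

From HB Require Import structures.
From mathcomp Require Import all_boot all_order all_algebra.
From mathcomp Require Import all_classical all_reals all_analysis.
Import Order.TTheory GRing.Theory Num.Theory.
Import numFieldNormedType.Exports.
Local Open Scope classical_set_scope.
Local Open Scope ring_scope.

(* The exact gradient v = gJL + gB of H is nonzero, so <v, v> > 0.  The inner
   product is continuous in its first argument and gJA omega + gB tends to v,
   hence <gJA omega + gB, v> tends to <v, v> and is positive for omega close
   enough to omega_star. *)

Section InnerProduct.
Context {R : realType} {n : nat}.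
Implicit Types u v w : 'rV[R]_n.

Lemma dotvBl u w v : dotv (u - w) v = dotv u v - dotv w v.
Proof.
by rewrite /dotv -sumrB; apply: eq_bigr => i _; rewrite !mxE mulrBl.
Qed.

Lemma dotvv_gt0 v : v != 0 -> 0 < dotv v v.
Proof.
move=> v_neq0; have [i vi_neq0] : exists i, v 0 i != 0.
  apply/existsP; apply: contraNT v_neq0 => /existsPn v_eq0.
  by apply/eqP/matrixP => a j; rewrite ord1 mxE; apply/eqP/negPn.
rewrite /dotv (bigD1 i) //= ltr_pwDl //.
  by rewrite lt_def mulf_neq0 //= -expr2 sqr_ge0.
by apply: sumr_ge0 => j _; rewrite -expr2 sqr_ge0.
Qed.

Lemma mx_entry_le_norm m p (x : 'M[R]_(m, p)) i j : `|x i j| <= `|x|.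
Proof.
have -> : `|x| = mx_norm x by [].
by rewrite mx_normrE (bigD1 (i, j)) //= le_max lexx.
Qed.

Lemma norm_dotv_le u v : `|dotv u v| <= `|u| * \sum_(i < n) `|v 0 i|.
Proof.
rewrite /dotv mulr_sumr (le_trans (ler_norm_sum _ _ _)) //.
by apply: ler_sum => i _; rewrite normrM ler_wpM2r ?mx_entry_le_norm.
Qed.

Lemma cvg_dotvl {T : Type} {F : set_system T} {FF : Filter F}
    {f : T -> 'rV[R]_n} {u} v :
  f @ F --> u -> dotv (f x) v @[x --> F] --> dotv u v.
Proof.
move=> /cvgrPdist_lt f_cvg; apply/cvgrPdist_lt => e e_gt0.
set S := \sum_(i < n) `|v 0 i|.
have S_ge0 : 0 <= S by apply: sumr_ge0.
have S1_gt0 : 0 < 1 + S by rewrite ltr_pwDl.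
near=> x.
rewrite -dotvBl (le_lt_trans (norm_dotv_le _ _)) //.
have fx_near : `|u - f x| < e / (1 + S) by near: x; apply: f_cvg; rewrite divr_gt0.
apply: (le_lt_trans (ler_wpM2r S_ge0 (ltW fx_near))).
rewrite mulrAC ltr_pdivrMr // ltr_pM2l // ltrDr ltr01.
Unshelve. all: by end_near.
Qed.
End InnerProduct.

Lemma near_within_sqr_dist (R : realType) (p : nat) (Omega : set 'rV[R]_p)
    (a : 'rV[R]_p) (P : 'rV[R]_p -> Prop) :
  (\forall x \near within Omega (nbhs a), P x) ->
  exists delta : R, 0 < delta /\
    forall x, Omega x -> `|x - a| ^+ 2 <= delta -> P x.
Proof.
rewrite /within /= => /nbhs_normP[r r_gt0 Pr].
exists ((r / 2) ^+ 2); split; first by rewrite exprn_gt0 ?divr_gt0.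
have r2_ge0 : 0 <= r / 2 by rewrite divr_ge0 // ltW.
move=> x Ox; rewrite ler_pXn2r ?nnegrE // => xa_le.
apply: Pr => //=; rewrite distrC (le_lt_trans xa_le) //.
by rewrite ltr_pdivrMr // ltr_pMr // ltr1n.
Qed.

Theorem lemma3 (R : realType) (c m p : nat)
  (T : set 'rV[R]_c) (g : 'I_m -> 'rV[R]_c -> R)
  (JL : 'rV[R]_c -> R) (thk : 'rV[R]_c) (gJL gB : 'rV[R]_c)
  (Omega : set 'rV[R]_p) (omega_star : 'rV[R]_p)
  (gJA : 'rV[R]_p -> 'rV[R]_c) :
  compact T ->
  (forall th, (forall j, 0 <= g j th) <-> T th) ->
  (forall j, 0 < g j thk) ->
  is_grad (barrier g) thk gB ->
  is_grad JL thk gJL ->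
  `|gJL| != 0 ->
  gJL + gB != 0 ->
  Omega omega_star ->
  gJA @ within Omega (nbhs omega_star) --> gJL ->
  exists delta : R, 0 < delta /\
    forall omega, Omega omega -> `|omega - omega_star| ^+ 2 <= delta ->
      0 < dotv (gJA omega + gB) (gJL + gB).
Proof.
move=> _ _ _ _ _ _ gH_neq0 _ gJA_cvg.
have gHA_cvg : gJA x + gB @[x --> within Omega (nbhs omega_star)] --> gJL + gB.
  exact: cvgD gJA_cvg (cvg_cst _).
apply: near_within_sqr_dist.
exact: cvgr_gt _ (cvg_dotvl _ gHA_cvg) 0 (dotvv_gt0 _ gH_neq0).
Qed.
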